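(* Let $t_1,t_2$ be types, $p$ a privilege, and $u:\mathbb{N}\to[\![t_1\to t_2]\!]$ an ascending chain. If $\mathsf{pure}\,p\,(t_1\to t_2)(u_i)$ holds for every $i$, then $\mathsf{pure}\,p\,(t_1\to t_2)(\bigsqcup_i u_i)$ holds.
   Context: Fix a set $\mathsf{Privileges}$. Types $t::=\mathtt{bool}\mid t_1\to t_2$. $\bot,\star$ are two distinct values, neither booleans nor functions. For a cpo $C$ (poset with lubs of ascending chains), $C_{\bot\star}=C\cup\{\bot,\star\}$ with $u\le v$ iff $u=\bot$, or $u=v$, or $u,v\in C$ with $u\le v$. $[\![\mathtt{bool}]\!]=\{\mathsf{true},\mathsf{false}\}$ and $\mathcal{P}(\mathsf{Privileges})$ are ordered by equality; $[\![t_1\to t_2]\!]=\mathcal{P}(\mathsf{Privileges})\to[\![t_1]\!]\to[\![t_2]\!]_{\bot\star}$, continuous functions ordered pointwise (lubs pointwise). Semantic $p$-purity $\mathsf{pure}\,p\,t$ on $[\![t]\!]_{\bot\star}$: $\mathsf{pure}\,p\,t(\bot)$ and $\mathsf{pure}\,p\,t(\star)$ are true; $\mathsf{pure}\,p\,\mathtt{bool}(b)$ is true; $\mathsf{pure}\,p\,(t_1\to t_2)(f)$ iff for all $P\subseteq\mathsf{Privileges}$ and all $d\in[\![t_1]\!]$, $\mathsf{pure}\,p\,t_1(d)$ implies both $\mathsf{pure}\,p\,t_2(fPd)$ and $fPd=f(P\setminus\{p\})d$. *)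

Set Implicit Arguments.

Inductive ty : Type :=
| TBool : ty
| TArr : ty -> ty -> ty.

Record cpo : Type := Cpo { car : Type; le : car -> car -> Prop }.

Definition chain (C : cpo) (c : nat -> car C) : Prop :=
  forall n, le C (c n) (c (S n)).

Definition is_lub (C : cpo) (c : nat -> car C) (l : car C) : Prop :=
  (forall n, le C (c n) l) /\
  (forall u, (forall n, le C (c n) u) -> le C l u).

Definition monotone (A B : cpo) (g : car A -> car B) : Prop :=
  forall x y, le A x y -> le B (g x) (g y).

Definition continuous (A B : cpo) (g : car A -> car B) : Prop :=
  monotone A B g /\
  forall c l, chain A c -> is_lub A c l -> is_lub B (fun n => g (c n)) (g l).

Inductive lift (A : Type) : Type :=
| Bot : lift A
| Star : lift A
| Val : A -> lift A.
Arguments Bot {A}.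
Arguments Star {A}.

Definition lift_le (C : cpo) (u v : lift (car C)) : Prop :=
  u = Bot \/ u = v \/
  exists a b, u = Val a /\ v = Val b /\ le C a b.

Definition lift_cpo (C : cpo) : cpo := Cpo (@lift_le C).

(* Subsets of Privileges; P(Privileges) is ordered by equality (discrete). *)
Definition privset (Priv : Type) : Type := Priv -> Prop.

Definition remove (Priv : Type) (P : privset Priv) (p : Priv) : privset Priv :=
  fun x => P x /\ x <> p.

(* [[t]] : continuous functions P(Priv) -> [[t1]] -> [[t2]]_{bot,star},
   ordered pointwise. Since P(Priv) is discrete, continuity of the curried
   function amounts to continuity of each [f P]. *)
Fixpoint den (Priv : Type) (t : ty) : cpo :=
  match t with
  | TBool => Cpo (@eq bool)
  | TArr t1 t2 =>
      Cpo (fun (f g : { f : privset Priv -> car (den Priv t1) ->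
                                 car (lift_cpo (den Priv t2))
                       | forall P, continuous (den Priv t1)
                                     (lift_cpo (den Priv t2)) (f P) }) =>
             forall P d, le (lift_cpo (den Priv t2))
                            (proj1_sig f P d) (proj1_sig g P d))
  end.

Fixpoint pure (Priv : Type) (p : Priv) (t : ty) : car (lift_cpo (den Priv t)) -> Prop :=
  match t return car (lift_cpo (den Priv t)) -> Prop with
  | TBool => fun v => True
  | TArr t1 t2 => fun v =>
      match v with
      | Bot => True
      | Star => True
      | Val f =>
          forall (P : privset Priv) (d : car (den Priv t1)),
            pure p t1 (Val d) ->
            pure p t2 (proj1_sig f P d) /\
            proj1_sig f P d = proj1_sig f (remove P p) d
      end
  end.

(* Lubs in [[t1 -> t2]] are computed pointwise, because the pointwise lub of
   a chain of continuous functions is again continuous and lubs are unique.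
   Hence (lub u) P d is the lub of the chain u_i P d, which coincides with
   the chain u_i (P \ {p}) d when d is pure.  So both lubs agree, and the lub
   is pure by induction on t2: in [[t2]]_{bot,star} a chain with lub [Val a]
   is eventually of the form [Val (g k)] for a chain g with lub a. *)
From Stdlib Require Import Classical ClassicalEpsilon FunctionalExtensionality
  ProofIrrelevance Relations Arith Lia.
Set Implicit Arguments.

Definition porder (C : cpo) : Prop := order (car C) (le C).

Definition chain_complete (C : cpo) : Prop :=
  forall c, chain C c -> exists l, is_lub C c l.

Lemma chain_le (C : cpo) (c : nat -> car C) :
  porder C -> chain C c -> forall n m, n <= m -> le C (c n) (c m).
Proof.
  intros [Hrefl Htrans _] Hc n m Hnm.
  induction Hnm; [apply Hrefl | eapply Htrans; eauto].
Qed.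

Lemma is_lub_unique (C : cpo) c l1 l2 :
  porder C -> is_lub C c l1 -> is_lub C c l2 -> l1 = l2.
Proof. intros [_ _ Hanti] [H1 H1'] [H2 H2']. apply Hanti; auto. Qed.

Section PointwiseLub.

Variables (A B : cpo) (fs : nat -> car A -> car B) (F : car A -> car B).
Hypothesis B_trans : transitive (car B) (le B).
Hypothesis fs_continuous : forall n, continuous A B (fs n).
Hypothesis F_lub : forall x, is_lub B (fun n => fs n x) (F x).

Lemma pointwise_lub_monotone : monotone A B F.
Proof.
  intros x y Hxy. apply (F_lub x). intros n.
  apply B_trans with (fs n y); [apply (fs_continuous n); auto | apply (F_lub y)].
Qed.

Lemma pointwise_lub_continuous : continuous A B F.
Proof.
  split; [exact pointwise_lub_monotone |]. intros c l Hc Hl. split.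
  - intros m. apply pointwise_lub_monotone, Hl.
  - intros v Hv. apply (F_lub l). intros n.
    apply (proj2 (fs_continuous n) c l Hc Hl). intros m.
    apply B_trans with (F (c m)); [apply (F_lub (c m)) | apply Hv].
Qed.

End PointwiseLub.

Section Lift.

Variable C : cpo.
Hypothesis C_porder : porder C.

Lemma lift_le_Star_l v : lift_le C Star v -> v = Star.
Proof. intros [H | [H | [a [b [E _]]]]]; congruence. Qed.

Lemma lift_le_Bot_r v : lift_le C v Bot -> v = Bot.
Proof. intros [H | [H | [a [b [_ [E _]]]]]]; congruence. Qed.

Lemma lift_le_Val_l a v : lift_le C (Val a) v -> exists b, v = Val b /\ le C a b.
Proof.
  intros [H | [H | [a' [b [E1 [E2 H]]]]]]; try discriminate.
  - subst. exists a. split; [reflexivity | apply C_porder].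
  - injection E1 as ->. eauto.
Qed.

Lemma lift_le_Val a b : lift_le C (Val a) (Val b) <-> le C a b.
Proof.
  split.
  - intros H. destruct (lift_le_Val_l H) as [b' [E H']]. congruence.
  - intros H. right; right; eauto.
Qed.

Lemma lift_porder : porder (lift_cpo C).
Proof.
  destruct C_porder as [Hrefl Htrans Hanti].
  split; simpl; unfold lift_le.
  - intros x. right; left; reflexivity.
  - intros x y z [H1 | [<- | [a [b [-> [-> H1]]]]]] H2; auto.
    destruct (lift_le_Val_l H2) as [c [-> H2']].
    right; right; exists a, c; eauto.
  - intros x y [-> | [<- | [a [b [-> [-> H1]]]]]] H2; auto.
    + symmetry. apply lift_le_Bot_r, H2.
    + apply lift_le_Val in H2. f_equal. auto.
Qed.

Section Tail.

Variables (c : nat -> car (lift_cpo C)) (N : nat) (g : nat -> car C).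
Hypothesis c_chain : chain (lift_cpo C) c.
Hypothesis c_tail : forall k, c (N + k) = Val (g k).

Lemma tail_chain : chain C g.
Proof.
  intros k. apply lift_le_Val. rewrite <- !c_tail.
  replace (N + S k) with (S (N + k)) by lia. apply c_chain.
Qed.

Lemma tail_upper w : (forall k, le C (g k) w) -> forall n, lift_le C (c n) (Val w).
Proof.
  intros Hw n. destruct (le_lt_dec N n) as [Hn | Hn].
  - replace n with (N + (n - N)) by lia. rewrite c_tail. apply lift_le_Val, Hw.
  - apply (ord_trans _ _ lift_porder) with (c N).
    + apply (chain_le lift_porder c_chain). lia.
    + replace N with (N + 0) by lia. rewrite c_tail. apply lift_le_Val, Hw.
Qed.

Lemma is_lub_tail b : is_lub (lift_cpo C) c (Val b) <-> is_lub C g b.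
Proof.
  split; intros [Hub Hleast].
  - split.
    + intros k. apply lift_le_Val. rewrite <- c_tail. apply Hub.
    + intros w Hw. apply lift_le_Val, Hleast, tail_upper, Hw.
  - split; [apply tail_upper, Hub |].
    intros v Hv. pose proof (Hv N) as HvN.
    replace N with (N + 0) in HvN by lia. rewrite c_tail in HvN.
    destruct (lift_le_Val_l HvN) as [w [-> _]].
    apply lift_le_Val, Hleast. intros k. apply lift_le_Val.
    rewrite <- c_tail. apply Hv.
Qed.

End Tail.

Arguments tail_chain [c N g].
Arguments is_lub_tail [c N g].

Lemma lift_chain_Val_tail c N a :
  chain (lift_cpo C) c -> c N = Val a ->
  exists g, forall k, c (N + k) = Val (g k).
Proof.
  intros Hc E.
  assert (Hval : forall k, exists b, c (N + k) = Val b).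
  { intros k. assert (H := chain_le lift_porder Hc (n := N) (m := N + k)).
    rewrite E in H. destruct (lift_le_Val_l (H ltac:(lia))) as [b [Eb _]]. eauto. }
  exists (fun k => match c (N + k) with Val b => b | _ => a end).
  intros k. destruct (Hval k) as [b Eb]. rewrite Eb. reflexivity.
Qed.

Arguments lift_chain_Val_tail [c N a].

Lemma lift_chain_complete : chain_complete C -> chain_complete (lift_cpo C).
Proof.
  intros HC c Hc.
  destruct (classic (forall n, c n = Bot)) as [Hbot | [N HN]%not_all_ex_not].
  - exists Bot. split; [| intros; left; reflexivity].
    intros n. rewrite Hbot. apply lift_porder.
  - destruct (c N) as [| | a] eqn:E; [congruence | |].
    + exists Star. split.
      * intros n. destruct (le_lt_dec n N).
        -- rewrite <- E. apply (chain_le lift_porder Hc). auto.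
        -- assert (H := chain_le lift_porder Hc (n := N) (m := n)).
           rewrite E in H. rewrite (lift_le_Star_l (H ltac:(lia))).
           apply lift_porder.
      * intros v Hv. specialize (Hv N). rewrite E in Hv.
        rewrite (lift_le_Star_l Hv). apply lift_porder.
    + destruct (lift_chain_Val_tail Hc E) as [g Hg].
      destruct (HC g (tail_chain Hc Hg)) as [b Hb].
      exists (Val b). apply (is_lub_tail Hc Hg), Hb.
Qed.

Lemma is_lub_Val_tail c a :
  chain (lift_cpo C) c -> is_lub (lift_cpo C) c (Val a) ->
  exists N g, (forall k, c (N + k) = Val (g k)) /\ chain C g /\ is_lub C g a.
Proof.
  intros Hc Hl.
  destruct (classic (exists N b, c N = Val b)) as [[N [b E]] | Hnone].
  - destruct (lift_chain_Val_tail Hc E) as [g Hg].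
    exists N, g. split; [exact Hg | split].
    + exact (tail_chain Hc Hg).
    + apply (is_lub_tail Hc Hg), Hl.
  - exfalso. destruct (classic (exists n, c n = Star)) as [[n En] | Hnostar].
    + pose proof (proj1 Hl n) as H. rewrite En in H.
      discriminate (lift_le_Star_l H).
    + assert (H : lift_le C (Val a) Bot).
      { apply Hl. intros n. left.
        destruct (c n) as [| | b] eqn:E; eauto; exfalso; eauto. }
      discriminate (lift_le_Bot_r H).
Qed.

End Lift.

Section Arrow.

Variables (Priv : Type) (t1 t2 : ty).
Hypothesis t2_porder : porder (den Priv t2).

Lemma arrow_porder : porder (den Priv (TArr t1 t2)).
Proof.
  destruct (lift_porder t2_porder) as [Hrefl Htrans Hanti].
  split; simpl.
  - intros f P d. apply Hrefl.
  - intros f g h H1 H2 P d. eapply Htrans; [apply H1 | apply H2].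
  - intros [f Hf] [g Hg] H1 H2. apply subset_eq_compat.
    apply functional_extensionality; intros P.
    apply functional_extensionality; intros d. apply Hanti; [apply H1 | apply H2].
Qed.

Lemma arrow_is_lub_of_pointwise {u : nat -> car (den Priv (TArr t1 t2))} {l} :
  (forall P d,
    is_lub (lift_cpo (den Priv t2)) (fun n => proj1_sig (u n) P d) (proj1_sig l P d)) ->
  is_lub (den Priv (TArr t1 t2)) u l.
Proof.
  intros Hl. split.
  - intros n P d. apply (Hl P d).
  - intros w Hw P d. apply (Hl P d). intros n. apply Hw.
Qed.

Lemma arrow_pointwise_lub_exists (u : nat -> car (den Priv (TArr t1 t2))) :
  chain_complete (den Priv t2) -> chain (den Priv (TArr t1 t2)) u ->
  exists l : car (den Priv (TArr t1 t2)), forall P d,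
    is_lub (lift_cpo (den Priv t2)) (fun n => proj1_sig (u n) P d) (proj1_sig l P d).
Proof.
  intros Hcomplete Hu.
  assert (Hlub : forall P d, exists l,
             is_lub (lift_cpo (den Priv t2)) (fun n => proj1_sig (u n) P d) l).
  { intros P d. apply (lift_chain_complete t2_porder Hcomplete). intros n. apply (Hu n). }
  set (F := fun P d => proj1_sig (constructive_indefinite_description _ (Hlub P d))).
  assert (F_lub : forall P d,
             is_lub (lift_cpo (den Priv t2)) (fun n => proj1_sig (u n) P d) (F P d)).
  { intros P d. exact (proj2_sig (constructive_indefinite_description _ (Hlub P d))). }
  clearbody F.
  assert (F_continuous : forall P, continuous (den Priv t1) (lift_cpo (den Priv t2)) (F P)).
  { intros P. apply (@pointwise_lub_continuous _ _ (fun n => proj1_sig (u n) P)).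
    - apply (lift_porder t2_porder).
    - intros n. apply (proj2_sig (u n)).
    - apply F_lub. }
  exists (exist _ F F_continuous). exact F_lub.
Qed.

Lemma arrow_is_lub_pointwise (u : nat -> car (den Priv (TArr t1 t2))) lu :
  chain_complete (den Priv t2) ->
  chain (den Priv (TArr t1 t2)) u -> is_lub (den Priv (TArr t1 t2)) u lu ->
  forall P d,
    is_lub (lift_cpo (den Priv t2)) (fun n => proj1_sig (u n) P d) (proj1_sig lu P d).
Proof.
  intros Hcomplete Hu Hlu.
  destruct (arrow_pointwise_lub_exists Hcomplete Hu) as [l Hl].
  replace lu with l; [exact Hl |].
  apply (is_lub_unique arrow_porder (arrow_is_lub_of_pointwise Hl) Hlu).
Qed.

End Arrow.

Lemma den_porder_complete (Priv : Type) t :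
  porder (den Priv t) /\ chain_complete (den Priv t).
Proof.
  induction t as [| t1 _ t2 [Hord2 Hcomp2]].
  - split.
    + split; simpl; [intros x | intros x y z | intros x y]; congruence.
    + intros c Hc. exists (c 0). split; simpl.
      * intros n. induction n as [| n IHn]; [reflexivity | rewrite <- IHn; symmetry; apply Hc].
      * intros v Hv. apply Hv.
  - split; [apply arrow_porder, Hord2 |].
    intros u Hu. destruct (arrow_pointwise_lub_exists Hord2 Hcomp2 Hu) as [l Hl].
    exists l. apply arrow_is_lub_of_pointwise, Hl.
Qed.

Definition pure_lub_closed (Priv : Type) (p : Priv) (t : ty) : Prop :=
  forall c l, chain (lift_cpo (den Priv t)) c -> is_lub (lift_cpo (den Priv t)) c l ->
  (forall n, pure p t (c n)) -> pure p t l.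

Lemma pure_arrow_lub (Priv : Type) (p : Priv) t1 t2 :
  pure_lub_closed p t2 ->
  forall (u : nat -> car (den Priv (TArr t1 t2))) lu,
  chain (den Priv (TArr t1 t2)) u -> is_lub (den Priv (TArr t1 t2)) u lu ->
  (forall i, pure p (TArr t1 t2) (Val (u i))) ->
  pure p (TArr t1 t2) (Val lu).
Proof.
  intros Hclosed u lu Hu Hlu Hpure P d Hd.
  destruct (den_porder_complete Priv t2) as [Hord2 Hcomp2].
  pose proof (arrow_is_lub_pointwise Hord2 Hcomp2 Hu Hlu) as Hpw.
  assert (Hchain : forall Q, chain (lift_cpo (den Priv t2)) (fun n => proj1_sig (u n) Q d)).
  { intros Q n. apply (Hu n). }
  split.
  - apply (Hclosed _ _ (Hchain P) (Hpw P d)). intros n. apply (Hpure n P d Hd).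
  - assert (Hsame : (fun n => proj1_sig (u n) (remove P p) d) = (fun n => proj1_sig (u n) P d)).
    { apply functional_extensionality. intros n. symmetry. apply (Hpure n P d Hd). }
    pose proof (Hpw (remove P p) d) as Hremove. rewrite Hsame in Hremove.
    exact (is_lub_unique (lift_porder Hord2) (Hpw P d) Hremove).
Qed.

Lemma pure_lub_closed_all (Priv : Type) (p : Priv) t : pure_lub_closed p t.
Proof.
  induction t as [| t1 _ t2 IH2]; intros c l Hc Hl Hpure; [exact I |].
  destruct l as [| | f]; try exact I.
  destruct (den_porder_complete Priv (TArr t1 t2)) as [Hord _].
  destruct (is_lub_Val_tail Hord Hc Hl) as [N [g [Hg [Hgchain Hglub]]]].
  apply (pure_arrow_lub IH2 Hgchain Hglub).
  intros k. rewrite <- Hg. apply Hpure.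
Qed.

Theorem lemma3 (Priv : Type) (t1 t2 : ty) (p : Priv)
  (u : nat -> car (den Priv (TArr t1 t2))) (lu : car (den Priv (TArr t1 t2))) :
  chain (den Priv (TArr t1 t2)) u ->
  is_lub (den Priv (TArr t1 t2)) u lu ->
  (forall i, pure p (TArr t1 t2) (Val (u i))) ->
  pure p (TArr t1 t2) (Val lu).
Proof. apply pure_arrow_lub, pure_lub_closed_all. Qed.
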